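(* Let $\mathscr{C}\subseteq\mathrm{GF}(4)^n$ be a scalable code. The following are equivalent: (i) $\mathrm{Im}_{\mathscr{B}}(\mathscr{C})\subseteq\mathrm{GF}(2)^{2n}$ is self-orthogonal w.r.t. the canonical inner product $\sum_{i=1}^{2n}x_iy_i$ for some basis $\mathscr{B}$ of $\mathrm{GF}(4)$ over $\mathrm{GF}(2)$; (ii) $\mathrm{Im}_{\mathscr{B}}(\mathscr{C})$ is self-orthogonal w.r.t. the canonical inner product for all bases $\mathscr{B}$ of $\mathrm{GF}(4)$ over $\mathrm{GF}(2)$; (iii) $\mathscr{C}$ is self-orthogonal w.r.t. the canonical inner product $\sum_{i=1}^n x_iy_i$ on $\mathrm{GF}(4)^n$.
   Context: $\mathrm{Tr}:\mathrm{GF}(4)\to\mathrm{GF}(2)$, $\mathrm{Tr}(a)=a+a^2$. The dual basis of a basis $\{\gamma_1,\gamma_2\}$ of $\mathrm{GF}(4)$ over $\mathrm{GF}(2)$ is the unique basis $\{\beta_1,\beta_2\}$ with $\mathrm{Tr}(\gamma_i\beta_j)=\delta_{ij}$. A code $\mathscr{C}\subseteq\mathrm{GF}(4)^n$ is scalable if $x\in\mathscr{C}\Rightarrow\alpha x\in\mathscr{C}$ for all $\alpha\in\mathrm{GF}(4)$. For a basis $\mathscr{B}$ with dual basis $\{\beta_1,\beta_2\}$, $\mathrm{Im}_{\mathscr{B}}(\mathscr{C})=\{(\mathrm{Tr}(\beta_1x_1),\ldots,\mathrm{Tr}(\beta_1x_n),\mathrm{Tr}(\beta_2x_1),\ldots,\mathrm{Tr}(\beta_2x_n)):x\in\mathscr{C}\}$.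 A code $D$ is self-orthogonal w.r.t. a form $g$ if $g(x,y)=0$ for all $x,y\in D$. *)

From HB Require Import structures.
From mathcomp Require Import all_boot all_order all_algebra all_field.
Set Implicit Arguments. Unset Strict Implicit. Unset Printing Implicit Defensive.
Import GRing.Theory.
Local Open Scope ring_scope.

(* GF(4) is modelled as an arbitrary finite field F with #|F| = 4;
   GF(2) is 'F_2. *)

(* Tr(a) = a + a^2, computed in F (its values lie in the prime field {0,1}). *)
Definition tr (F : finFieldType) (a : F) : F := a + a ^+ 2.

(* Tr viewed as a map into GF(2) = 'F_2 (identifying the prime subfield
   {0,1} of F with 'F_2). *)
Definition trF2 (F : finFieldType) (a : F) : 'F_2 :=
  if tr a == 1 then 1 else 0.

Definition is_basis2 (F : finFieldType) (g1 g2 : F) : Prop :=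
  (forall c1 c2 : bool, (c1%:R) * g1 + (c2%:R) * g2 = 0 -> ~~ c1 /\ ~~ c2) /\
  (forall a : F, exists c1 c2 : bool, a = (c1%:R) * g1 + (c2%:R) * g2).

Definition is_dual_basis2 (F : finFieldType) (g1 g2 b1 b2 : F) : Prop :=
  [/\ tr (g1 * b1) = 1, tr (g1 * b2) = 0, tr (g2 * b1) = 0 & tr (g2 * b2) = 1].

Definition scalable_code (F : finFieldType) (n : nat) (C : {set 'rV[F]_n}) : Prop :=
  forall (x : 'rV[F]_n) (alpha : F), x \in C -> alpha *: x \in C.

Definition imB_vec (F : finFieldType) (n : nat) (b1 b2 : F) (x : 'rV[F]_n)
  : 'rV['F_2]_(n + n) :=
  row_mx (\row_j trF2 (b1 * x ord0 j)) (\row_j trF2 (b2 * x ord0 j)).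

(* Im_B(C), B with dual basis {b1, b2}. *)
Definition imB (F : finFieldType) (n : nat) (b1 b2 : F) (C : {set 'rV[F]_n})
  : {set 'rV['F_2]_(n + n)} := [set imB_vec b1 b2 x | x in C].

Definition self_orthogonal (K : finFieldType) (m : nat) (D : {set 'rV[K]_m}) : Prop :=
  forall x y : 'rV[K]_m, x \in D -> y \in D -> \sum_(i < m) x ord0 i * y ord0 i = 0.

From HB Require Import structures.
From mathcomp Require Import all_boot all_order all_algebra all_field.
From mathcomp Require Import ring.
Import GRing.Theory.
Local Open Scope ring_scope.

(* In GF(4) the trace of an element is 0 exactly on the prime field {0, 1}.
   Hence a dual pair of bases satisfies b1 = g2^-1 and b2 = g1^-1, and
   expanding v = Tr(b1 v) g1 + Tr(b2 v) g2 gives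
     Tr(b1 u) Tr(b1 v) + Tr(b2 u) Tr(b2 v) = Tr(u v / (g1 g2)),
   so the binary inner product of Im_B(x) and Im_B(y) is Tr(c <x, y>) with
   c = (g1 g2)^-1 != 0. This vanishes when <x, y> = 0; conversely, as C is
   scalable and the trace form is nondegenerate, Tr(c <a x, y>) = 0 for all
   scalars a forces <x, y> = 0. *)

Lemma sqrf_eq_id (R : idomainType) (t : R) : (t ^+ 2 == t) = (t == 0) || (t == 1).
Proof. by rewrite -subr_eq0 expr2 -{3}(mulr1 t) -mulrBr mulf_eq0 subr_eq0. Qed.

Section TraceGF4.
Variable F : finFieldType.
Hypothesis hF : #|F| = 4%N.

Lemma pchar2_GF4 : 2 \in [pchar F].
Proof. exact: (@card_finPcharP _ 2 2). Qed.

Lemma expr4_GF4 (x : F) : x ^+ 4 = x.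
Proof. by rewrite -{2}(expf_card x) hF. Qed.

Lemma sqrrD_GF4 (x y : F) : (x + y) ^+ 2 = x ^+ 2 + y ^+ 2.
Proof. by rewrite -!(pFrobenius_autE pchar2_GF4) rmorphD. Qed.

Lemma trD (x y : F) : tr (x + y) = tr x + tr y.
Proof. by rewrite /tr sqrrD_GF4 addrACA. Qed.

Lemma tr0 : tr (0 : F) = 0.
Proof. by rewrite /tr expr0n addr0. Qed.

Lemma trX2 (x : F) : tr (x ^+ 2) = tr x.
Proof. by rewrite /tr -exprM expr4_GF4 addrC. Qed.

Lemma tr_sqr (x : F) : tr x ^+ 2 = tr x.
Proof. by rewrite -[RHS]trX2 /tr sqrrD_GF4. Qed.

Lemma tr_01 (x : F) : (tr x == 0) || (tr x == 1).
Proof. by rewrite -sqrf_eq_id tr_sqr. Qed.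

Lemma tr_eq0 (x : F) : (tr x == 0) = (x == 0) || (x == 1).
Proof. by rewrite /tr addr_eq0 oppr_pchar2 ?pchar2_GF4 // eq_sym sqrf_eq_id. Qed.

Lemma tr1 : tr (1 : F) = 0.
Proof. by apply/eqP; rewrite tr_eq0 eqxx orbT. Qed.

Lemma trZ (t z : F) : t ^+ 2 = t -> tr (t * z) = t * tr z.
Proof. by move=> tt; rewrite /tr exprMn tt mulrDr. Qed.

Lemma tr1_mul_neq0 (x y : F) : tr (x * y) = 1 -> (x != 0) && (y != 0).
Proof.
rewrite -negb_or -mulf_eq0 => h; apply/eqP => xy0.
by move: h; rewrite xy0 tr0 => /eqP; rewrite eq_sym oner_eq0.
Qed.

Lemma tr0_mul_inv (x y : F) : tr (x * y) = 0 -> x * y != 0 -> y = x^-1.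
Proof.
move/eqP; rewrite tr_eq0 => /orP[/eqP -> | /eqP xy1]; first by rewrite eqxx.
rewrite mulf_eq0 => /norP[x0 _].
by rewrite -(mulKf x0 y) xy1 mulr1.
Qed.

Lemma tr_surj : exists w : F, tr w = 1.
Proof.
have /subsetPn[w _] : ~~ ([set: F] \subset [set 0; 1]).
  apply/negP => /subset_leq_card; rewrite cardsT hF cards2.
  by case: (_ != _).
rewrite !inE => /norP[w0 w1]; exists w; apply/eqP.
by have := tr_01 w; rewrite tr_eq0 (negPf w0) (negPf w1).
Qed.

Lemma tr_form_nondegenerate (s : F) : (forall a, tr (a * s) = 0) -> s = 0.
Proof.
move=> trs0; apply/eqP/negPn/negP => s0.
have [w trw] := tr_surj.
by move: (trs0 (w / s)); rewrite mulfVK // trw => /eqP; rewrite oner_eq0.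
Qed.

Definition natrF2 (k : 'F_2) : F := (k : nat)%:R.

Lemma natrF2_0 : natrF2 0 = 0.
Proof. by []. Qed.

Lemma natrF2D (k l : 'F_2) : natrF2 (k + l) = natrF2 k + natrF2 l.
Proof. by rewrite /natrF2 -natrD -[RHS](GRing.natr_mod_pchar pchar2_GF4). Qed.

Lemma natrF2M (k l : 'F_2) : natrF2 (k * l) = natrF2 k * natrF2 l.
Proof. by rewrite /natrF2 -natrM -[RHS](GRing.natr_mod_pchar pchar2_GF4). Qed.

Lemma natrF2_eq0 (k : 'F_2) : natrF2 k = 0 -> k = 0.
Proof. by case: k => -[|[|//]] k_lt2 /eqP; rewrite ?oner_eq0 // => _; apply: val_inj. Qed.

Lemma natrF2_trF2 (a : F) : natrF2 (trF2 a) = tr a.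
Proof.
rewrite /trF2; case/orP: (tr_01 a) => /eqP ->; last by rewrite eqxx.
by rewrite eq_sym oner_eq0.
Qed.

Section DualBasis.
Variables g1 g2 b1 b2 : F.
Hypothesis basis : is_basis2 g1 g2.
Hypothesis dual : is_dual_basis2 g1 g2 b1 b2.

Lemma dual_basis2_neq0 : [&& g1 != 0, g2 != 0, b1 != 0 & b2 != 0].
Proof.
by case: dual => /tr1_mul_neq0/andP[-> ->] _ _ /tr1_mul_neq0/andP[-> ->].
Qed.

Lemma dual_basis2_inv : b1 = g2^-1 /\ b2 = g1^-1.
Proof.
have /and4P[g1nz g2nz b1nz b2nz] := dual_basis2_neq0.
by case: dual => _ tr12 tr21 _; split; apply: tr0_mul_inv; rewrite ?mulf_neq0.
Qed.

Lemma dual_basis2_coord (v : F) : v = tr (b1 * v) * g1 + tr (b2 * v) * g2.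
Proof.
case: basis => _ /(_ v) [c1 [c2 ->]]; case: dual => tr11 tr12 tr21 tr22.
have bool_sqr (c : bool) : (c%:R : F) ^+ 2 = c%:R by case: c; rewrite ?expr1n ?expr0n.
rewrite !mulrDr !trD !(mulrCA _ _%:R) !(trZ _ _ (bool_sqr _)) !(mulrC b1) !(mulrC b2).
by rewrite tr11 tr12 tr21 tr22 !mulr1 !mulr0 addr0 add0r.
Qed.

Lemma dual_basis2_tr_form (u v : F) :
  tr (b1 * u) * tr (b1 * v) + tr (b2 * u) * tr (b2 * v) = tr ((g1 * g2)^-1 * (u * v)).
Proof.
rewrite [in RHS](dual_basis2_coord v) !(mulrC (tr (_ * u))) -!trZ ?tr_sqr // -trD.
move: (tr (b1 * v)) (tr (b2 * v)) => c1 c2.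
have /and4P[g1nz g2nz _ _] := dual_basis2_neq0.
by case: dual_basis2_inv => -> ->; congr tr; field; rewrite g1nz g2nz.
Qed.

Lemma imB_vec_dot n (x y : 'rV[F]_n) :
  natrF2 (\sum_(i < n + n) imB_vec b1 b2 x ord0 i * imB_vec b1 b2 y ord0 i)
  = tr ((g1 * g2)^-1 * \sum_(j < n) x ord0 j * y ord0 j).
Proof.
rewrite big_split_ord natrF2D !(big_morph natrF2 natrF2D natrF2_0) -big_split.
rewrite mulr_sumr (big_morph (@tr F) trD tr0); apply: eq_bigr => j _.
rewrite /imB_vec !row_mxEl !row_mxEr !mxE !natrF2M !natrF2_trF2.
exact: dual_basis2_tr_form.
Qed.

Lemma self_orthogonal_imB n (C : {set 'rV[F]_n}) : scalable_code C ->
  self_orthogonal (imB b1 b2 C) <-> self_orthogonal C.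
Proof.
move=> scalC; have /and4P[g1nz g2nz _ _] := dual_basis2_neq0.
split=> [orthB x y xC yC | orth _ _ /imsetP[x xC ->] /imsetP[y yC ->]]; last first.
  by apply: natrF2_eq0; rewrite imB_vec_dot orth // mulr0 tr0.
have c_neq0 : (g1 * g2)^-1 != 0 by rewrite invr_eq0 mulf_neq0.
apply: (mulfI c_neq0); rewrite mulr0; apply: tr_form_nondegenerate => a.
have dot_scale : \sum_(j < n) (a *: x) ord0 j * y ord0 j = a * \sum_(j < n) x ord0 j * y ord0 j.
  by rewrite mulr_sumr; apply: eq_bigr => j _; rewrite mxE mulrA.
have := orthB _ _ (imset_f (imB_vec b1 b2) (scalC x a xC)) (imset_f _ yC).
by move/(congr1 natrF2); rewrite imB_vec_dot dot_scale mulrCA natrF2_0.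
Qed.

End DualBasis.

Lemma tr1_basis2 (w : F) : tr w = 1 -> is_basis2 1 w.
Proof.
move=> trw; have /norP[w0 w1] : ~~ ((w == 0) || (w == 1)) by rewrite -tr_eq0 trw oner_eq0.
have bool_coordE := (mulr1n, mulr0n, mul1r, mul0r, addr0, add0r).
split=> [c1 c2 | a].
  case: c1; case: c2; rewrite /= ?bool_coordE => // /eqP; rewrite ?oner_eq0 ?(negPf w0) //.
  by rewrite addr_eq0 oppr_pchar2 ?pchar2_GF4 // eq_sym (negPf w1).
have [tra0 | tra_neq0] := boolP (tr a == 0).
  move: tra0; rewrite tr_eq0 => /orP[] /eqP ->;
    [exists false, false | exists true, false]; by rewrite /= ?bool_coordE.
have : tr (a + w) == 0.
  move: (tr_01 a); rewrite (negPf tra_neq0) /= trD trw => /eqP ->.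
  by rewrite addrr_pchar2 ?pchar2_GF4.
rewrite tr_eq0 => /orP[] /eqP aw; rewrite -(addrK_pchar2 pchar2_GF4 w a) aw;
  [exists false, true | exists true, true]; by rewrite /= ?bool_coordE.
Qed.

Lemma exists_dual_basis2 :
  exists g1 g2 b1 b2 : F, is_basis2 g1 g2 /\ is_dual_basis2 g1 g2 b1 b2.
Proof.
have [w trw] := tr_surj.
have /andP[_ w0] : (1 != 0 :> F) && (w != 0) by apply: tr1_mul_neq0; rewrite mul1r.
have w3 : w ^+ 3 = 1 by apply: (mulIf w0); rewrite mul1r -exprSr expr4_GF4.
exists 1, w, (w ^+ 2), 1; split; first exact: tr1_basis2.
by split; rewrite ?mul1r ?mulr1 -?exprS ?w3 ?trX2 ?tr1.
Qed.

End TraceGF4.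

Theorem proposition1 (F : finFieldType) (hF : #|F| = 4%N) (n : nat)
  (C : {set 'rV[F]_n}) (hC : scalable_code C) :
  [/\ (exists g1 g2 b1 b2 : F, [/\ is_basis2 g1 g2, is_dual_basis2 g1 g2 b1 b2
          & self_orthogonal (imB b1 b2 C)]) <->
        (forall g1 g2 b1 b2 : F, is_basis2 g1 g2 -> is_dual_basis2 g1 g2 b1 b2 ->
          self_orthogonal (imB b1 b2 C)),
      (forall g1 g2 b1 b2 : F, is_basis2 g1 g2 -> is_dual_basis2 g1 g2 b1 b2 ->
          self_orthogonal (imB b1 b2 C)) <-> self_orthogonal C
    & self_orthogonal C <->
        (exists g1 g2 b1 b2 : F, [/\ is_basis2 g1 g2, is_dual_basis2 g1 g2 b1 b2
          & self_orthogonal (imB b1 b2 C)])].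
Proof.
have orthE g1 g2 b1 b2 (basis : is_basis2 g1 g2) (dual : is_dual_basis2 g1 g2 b1 b2) :=
  @self_orthogonal_imB F hF g1 g2 b1 b2 basis dual n C hC.
have [g1 [g2 [b1 [b2 [basis dual]]]]] := exists_dual_basis2 F hF.
have some_orth : (exists g1 g2 b1 b2 : F, [/\ is_basis2 g1 g2, is_dual_basis2 g1 g2 b1 b2
    & self_orthogonal (imB b1 b2 C)]) -> self_orthogonal C.
  by case=> h1 [h2 [h3 [h4 [hB hD /(orthE _ _ _ _ hB hD)]]]].
have all_orth : self_orthogonal C -> forall g1 g2 b1 b2 : F, is_basis2 g1 g2 ->
    is_dual_basis2 g1 g2 b1 b2 -> self_orthogonal (imB b1 b2 C).
  by move=> orth h1 h2 h3 h4 hB hD; apply/(orthE _ _ _ _ hB hD).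
split; split=> orth.
- exact/all_orth/some_orth.
- by exists g1, g2, b1, b2; split=> //; apply: orth basis dual.
- exact/(orthE _ _ _ _ basis dual)/(orth _ _ _ _ basis dual).
- exact: all_orth.
- by exists g1, g2, b1, b2; split=> //; apply/(orthE _ _ _ _ basis dual).
- exact: some_orth.
Qed.
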